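(* Fix integers $m\ge d\ge1$, $\lambda=d/m$, and $\sigma^2,\tau^2>0$. Then $L_d^{(m-d)}\big(\frac{x}{\sigma^2+\tau^2}\big)$ and $L_d^{(m-d)}\big(\frac{x}{\sigma^2}\big)\boxplus_{d,\lambda}L_d^{(m-d)}\big(\frac{x}{\tau^2}\big)$ have the same roots (they differ only by a nonzero constant factor).
   Context: $L_d^{(\alpha)}(x)=\sum_{i=0}^d\binom{d+\alpha}{d-i}\frac{(-x)^i}{i!}$. For $p=\sum_{i=0}^d(-1)^ia_ix^{d-i}$, $q=\sum_{i=0}^d(-1)^ib_ix^{d-i}$: $(p\boxplus_{d,\lambda}q)(x)=\sum_{k=0}^dx^{d-k}(-1)^k\sum_{i+j=k}\frac{(d-i)!(d-j)!}{d!(d-k)!}\frac{(m-i)!(m-j)!}{m!(m-k)!}a_ib_j$. *)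

From mathcomp Require Import all_boot all_order all_algebra.
Set Implicit Arguments. Unset Strict Implicit. Unset Printing Implicit Defensive.
Import Order.TTheory GRing.Theory Num.Theory.
Local Open Scope ring_scope.

Definition laguerre (R : fieldType) (d alpha : nat) : {poly R} :=
  \poly_(i < d.+1) ('C(d + alpha, d - i)%:R * (-1) ^+ i / (i`!)%:R).

Definition scale_arg (R : fieldType) (p : {poly R}) (s : R) : {poly R} :=
  p \Po (s^-1 *: 'X).

(* a_i such that p = sum_i (-1)^i a_i x^(d-i) *)
Definition acoef (R : fieldType) (d : nat) (p : {poly R}) (i : nat) : R :=
  (-1) ^+ i * p`_(d - i).

Definition rweight (R : fieldType) (d m i j k : nat) : R :=
  (((d - i)`! * (d - j)`!)%:R / ((d`! * (d - k)`!)%:R)) *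
  (((m - i)`! * (m - j)`!)%:R / ((m`! * (m - k)`!)%:R)).

(* Rectangular additive convolution p boxplus_{d, lambda} q with lambda = d/m;
   the parameter is given by the pair (d, m). *)
Definition rect_conv (R : fieldType) (d m : nat) (p q : {poly R}) : {poly R} :=
  \sum_(k < d.+1)
    ((-1) ^+ k * \sum_(i < k.+1)
        rweight R d m i (k - i) k * acoef d p i * acoef d q (k - i)) *: 'X^(d - k).

(* Write L_u(x) = L_d^(m-d)(x/u) = sum_i (-1)^i a_i(u) x^(d-i); then
   a_i(u) = (-1)^d C(m,i) / ((d-i)! u^(d-i)).  In the k-th coefficient of
   L_s boxplus L_t the weights (d-i)!(d-j)!(m-i)!(m-j)! cancel the factorials
   of a_i(s) a_j(t), because C(m,i) (m-i)! = m!/i!.  What remains is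
   C(m,k) / (d! (d-k)! (st)^d) * sum_(i+j=k) C(k,i) s^i t^j, and the binomial
   theorem turns the sum into (s+t)^k.  This is a_k(s+t) times the factor
   (-1)^d (s+t)^d / (d! (st)^d), which does not depend on k. *)

From mathcomp Require Import all_boot all_order all_algebra.
From mathcomp Require Import ring.

Set Implicit Arguments.
Unset Strict Implicit.
Unset Printing Implicit Defensive.

Import Order.TTheory GRing.Theory Num.Theory.
Local Open Scope ring_scope.

Lemma coef_comp_polyZX (R : comNzRingType) (p : {poly R}) (a : R) n :
  (p \Po (a *: 'X))`_n = p`_n * a ^+ n.
Proof.
rewrite comp_polyE.
under eq_bigr do rewrite exprZn scalerA.
rewrite -(poly_def _ (fun i => p`_i * a ^+ i)) coef_poly.
by case: ltnP => // le_p_n; rewrite nth_default ?mul0r.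
Qed.

Lemma mul_sign_sign (R : comPzRingType) n (x y : R) :
  (-1) ^+ n * x * ((-1) ^+ n * y) = x * y.
Proof. by rewrite mulrACA -expr2 sqrr_sign mul1r. Qed.

Lemma acoef_expansion (R : fieldType) d (p : {poly R}) :
  (size p <= d.+1)%N ->
  p = \sum_(k < d.+1) ((-1) ^+ k * acoef d p k) *: 'X^(d - k).
Proof.
move=> size_p; rewrite -{1}(take_poly_id size_p) /take_poly poly_def.
rewrite (reindex_inj rev_ord_inj) /=.
by apply: eq_bigr => k _; rewrite /acoef signrMK subSS.
Qed.

Lemma rect_conv_eq_scale (R : fieldType) d m (p q r : {poly R}) (c : R) :
  (size r <= d.+1)%N ->
  (forall k : nat, (k <= d)%N ->
     \sum_(i < k.+1) rweight R d m i (k - i) k * acoef d p i * acoef d q (k - i)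
     = c * acoef d r k) ->
  rect_conv d m p q = c *: r.
Proof.
move=> size_r coef_conv.
rewrite /rect_conv [in RHS](acoef_expansion size_r) scaler_sumr.
apply: eq_bigr => k _.
have le_k_d : (k <= d)%N by rewrite -ltnS ltn_ord.
rewrite scalerA (coef_conv _ le_k_d); congr (_ *: _).
exact: mulrCA.
Qed.

Lemma size_scaled_laguerre (R : fieldType) d alpha (u : R) :
  (size (scale_arg (laguerre R d alpha) u) <= d.+1)%N.
Proof.
have deg_L : ((size (laguerre R d alpha)).-1 <= d)%N.
  by rewrite -subn1 leq_subLR add1n size_poly.
have deg_uX : ((size (u^-1 *: 'X : {poly R})).-1 <= 1)%N.
  by rewrite -subn1 leq_subLR (leq_trans (size_scale_leq _ _)) // size_polyX.
apply: leq_trans (size_comp_poly_leq _ _) _.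
by rewrite ltnS (leq_trans (leq_mul deg_L deg_uX)) ?muln1.
Qed.

Lemma acoef_scaled_laguerre (R : fieldType) d alpha (u : R) k : (k <= d)%N ->
  acoef d (scale_arg (laguerre R d alpha) u) k
  = (-1) ^+ d * ('C(d + alpha, k)%:R / ((d - k)`!%:R * u ^+ (d - k))).
Proof.
move=> le_k_d; rewrite /acoef /scale_arg coef_comp_polyZX coef_poly.
have sign_d : (-1) ^+ d = (-1) ^+ k * (-1) ^+ (d - k) :> R.
  by rewrite -exprD subnKC.
rewrite ltnS leq_subr subKn // exprVn sign_d invfM.
ring.
Qed.

Lemma natr_fact_neq0 (R : numFieldType) n : n`!%:R != 0 :> R.
Proof. by rewrite pnatr_eq0 -lt0n fact_gt0. Qed.

Lemma natr_binE (R : numFieldType) n r : (r <= n)%N ->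
  'C(n, r)%:R = n`!%:R / (r`!%:R * (n - r)`!%:R) :> R.
Proof.
move=> le_r_n; rewrite -(bin_fact le_r_n) !natrM mulfK //.
by rewrite mulf_neq0 ?natr_fact_neq0.
Qed.

Lemma rweight_laguerre_term (R : numFieldType) d m k i (s t : R) :
  (i <= k)%N -> (k <= d)%N -> (d <= m)%N -> s != 0 -> t != 0 ->
  rweight R d m i (k - i) k
    * ('C(m, i)%:R / ((d - i)`!%:R * s ^+ (d - i)))
    * ('C(m, k - i)%:R / ((d - (k - i))`!%:R * t ^+ (d - (k - i))))
  = 'C(m, k)%:R / ((d`! * (d - k)`!)%:R * (s * t) ^+ d)
    * ((t ^+ (k - i) * s ^+ i) *+ 'C(k, i)).
Proof.
move=> le_i_k le_k_d le_d_m s_neq0 t_neq0.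
have split_s : s ^+ d = s ^+ (d - i) * s ^+ i.
  by rewrite -exprD subnK // (leq_trans le_i_k).
have split_t : t ^+ d = t ^+ (d - (k - i)) * t ^+ (k - i).
  by rewrite -exprD subnK // (leq_trans (leq_subr i k)).
have le_k_m : (k <= m)%N := leq_trans le_k_d le_d_m.
rewrite /rweight exprMn split_s split_t -[_ *+ 'C(k, i)]mulr_natr.
rewrite (natr_binE _ le_i_k) (natr_binE _ le_k_m).
rewrite (natr_binE _ (leq_trans le_i_k le_k_m)).
rewrite (natr_binE _ (leq_trans (leq_subr i k) le_k_m)) !natrM.
by field; rewrite !natr_fact_neq0 !expf_neq0.
Qed.

Definition laguerre_conv_const (R : numFieldType) d (s t : R) : R :=
  (-1) ^+ d * (s + t) ^+ d / (d`!%:R * (s * t) ^+ d).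

Section ScaledLaguerreConvolution.

Variables (R : numFieldType) (d m : nat) (s t : R).
Hypotheses (le_d_m : (d <= m)%N) (s_neq0 : s != 0) (t_neq0 : t != 0)
  (st_neq0 : s + t != 0).

Let L (u : R) := scale_arg (laguerre R d (m - d)) u.

Lemma rect_conv_coef_scaled_laguerre k : (k <= d)%N ->
  \sum_(i < k.+1) rweight R d m i (k - i) k * acoef d (L s) i * acoef d (L t) (k - i)
  = 'C(m, k)%:R / ((d`! * (d - k)`!)%:R * (s * t) ^+ d) * (s + t) ^+ k.
Proof.
move=> le_k_d; rewrite addrC exprDn mulr_sumr; apply: eq_bigr => -[i /= lt_i_k] _.
have le_i_k : (i <= k)%N by rewrite -ltnS.
have le_i_d : (i <= d)%N := leq_trans le_i_k le_k_d.
have le_ki_d : (k - i <= d)%N := leq_trans (leq_subr i k) le_k_d.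
rewrite -rweight_laguerre_term // !acoef_scaled_laguerre // subnKC //.
by rewrite -mulrA (@mul_sign_sign R) mulrA.
Qed.

Lemma rect_conv_coef_scaled_laguerre_ratio k : (k <= d)%N ->
  \sum_(i < k.+1) rweight R d m i (k - i) k * acoef d (L s) i * acoef d (L t) (k - i)
  = laguerre_conv_const d s t * acoef d (L (s + t)) k.
Proof.
move=> le_k_d; rewrite rect_conv_coef_scaled_laguerre // acoef_scaled_laguerre //.
have split_st : (s + t) ^+ d = (s + t) ^+ (d - k) * (s + t) ^+ k.
  by rewrite -exprD subnK.
rewrite subnKC // /laguerre_conv_const split_st natrM.
rewrite [RHS]mulrAC (@mul_sign_sign R).
by field; rewrite !natr_fact_neq0 !expf_neq0 ?mulf_neq0.
Qed.

Lemma laguerre_conv_const_neq0 : laguerre_conv_const d s t != 0.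
Proof.
by rewrite /laguerre_conv_const !(mulf_neq0, invr_neq0, expf_neq0, natr_fact_neq0)
  // oppr_eq0 oner_eq0.
Qed.

End ScaledLaguerreConvolution.

Theorem mainTheorem10 (R : realFieldType) (d m : nat) (s t : R) :
  (1 <= d)%N -> (d <= m)%N -> 0 < s -> 0 < t ->
  exists c : R, c != 0 /\
    rect_conv d m (scale_arg (laguerre R d (m - d)) s)
                  (scale_arg (laguerre R d (m - d)) t)
    = c *: scale_arg (laguerre R d (m - d)) (s + t).
Proof.
move=> _ le_d_m s_gt0 t_gt0.
have s_neq0 : s != 0 := lt0r_neq0 s_gt0.
have t_neq0 : t != 0 := lt0r_neq0 t_gt0.
have st_neq0 : s + t != 0 := lt0r_neq0 (addr_gt0 s_gt0 t_gt0).
exists (laguerre_conv_const d s t); split.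
  exact: laguerre_conv_const_neq0.
apply: rect_conv_eq_scale; first exact: size_scaled_laguerre.
exact: rect_conv_coef_scaled_laguerre_ratio.
Qed.
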